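(* Let $\mathscr{A}$ be a $C^*$-algebra with identity such that the set $\mathscr{A}'_m$ of all linear multiplicative functionals $\varphi\colon\mathscr{A}\to\mathbb{C}$ is total (i.e., if $\varphi(a)=0$ for all $\varphi\in\mathscr{A}'_m$ then $a=0$). Let $\mathscr{X}$ be a right $\mathscr{A}$-module which is also a normed space. Let $n\geq 2$ and let $E, F\colon \mathscr{X}^n\to\mathscr{A}$ be multi-$\mathscr{A}$-linear functions, and assume that $E$ is bounded and strong. Then the following are equivalent: (i) for all $x_1,\dots,x_n\in\mathscr{X}$, $E(x_1,\dots,x_n)=0$ implies $F(x_1,\dots,x_n)=0$; (ii) there exists $c\in\mathscr{A}$ such that $F(x_1,\dots,x_n)=cE(x_1,\dots,x_n)$ for all $x_1,\dots,x_n\in\mathscr{X}$. Moreover, each of these conditions implies that $F$ is bounded.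
   Context: A right $\mathscr{A}$-module $\mathscr{X}$ is a complex vector space with a right $\mathscr{A}$-action satisfying $(\alpha x)a=x(\alpha a)=\alpha(xa)$. A function $F\colon\mathscr{X}^n\to\mathscr{A}$ is multi-$\mathscr{A}$-linear if for all $x_1,\dots,x_n,y_j\in\mathscr{X}$, $\alpha\in\mathbb{C}$, $a\in\mathscr{A}$ and $j=1,\dots,n$: (A) $F$ is additive in the $j$-th variable; (B) $F(x_1,\dots,\alpha x_j a,\dots,x_n)=\alpha F(x_1,\dots,x_n)a$ if $j$ is even; (C) $F(x_1,\dots,\alpha x_j a,\dots,x_n)=\overline{\alpha}a^*F(x_1,\dots,x_n)$ if $j$ is odd. $F$ is bounded if there is $M$ with $\|F(x_1,\dots,x_n)\|\le M\|x_1\|\cdots\|x_n\|$ for all $x_i$. With $G_{\mathscr{A}}$ the set of invertible elements of $\mathscr{A}$, $F$ is strong if there exists $w\in\mathscr{X}$ with $F(w,w,\dots,w)\in G_{\mathscr{A}}$. *)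

From HB Require Import structures.
From mathcomp Require Import all_boot all_order all_algebra.
From mathcomp Require Import reals.
From mathcomp Require Export complex.
Set Implicit Arguments. Unset Strict Implicit. Unset Printing Implicit Defensive.
Import Order.TTheory GRing.Theory Num.Theory.
Local Open Scope ring_scope.

Notation cmod := ComplexField.Normc.normc.

Section Defs.
Variable R : realType.
Local Notation C := R[i].

Definition is_cnorm (V : lmodType C) (nrm : V -> R) : Prop :=
  [/\ forall v, 0 <= nrm v,
      forall v, nrm v = 0 -> v = 0,
      forall u v, nrm (u + v) <= nrm u + nrm v
    & forall (a : C) v, nrm (a *: v) = cmod a * nrm v].

Definition norm_complete (V : lmodType C) (nrm : V -> R) : Prop :=
  forall u : nat -> V,
    (forall e : R, 0 < e -> exists N, forall m k, (N <= m)%N -> (N <= k)%N ->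
        nrm (u m - u k) < e) ->
    exists l : V, forall e : R, 0 < e -> exists N, forall m, (N <= m)%N ->
        nrm (u m - l) < e.

Definition is_Cstar_algebra (A : algType C) (star : A -> A) (nrm : A -> R)
  : Prop :=
  [/\ [/\ is_cnorm nrm,
          forall a b : A, nrm (a * b) <= nrm a * nrm b
        & norm_complete nrm],
      [/\ forall a b : A, star (a + b) = star a + star b,
          forall (al : C) (a : A), star (al *: a) = conjc al *: star a,
          forall a b : A, star (a * b) = star b * star a
        & forall a : A, star (star a) = a]
    & forall a : A, nrm (star a * a) = nrm a ^+ 2].

Definition lin_mult_functional (A : algType C) (phi : A -> C) : Prop :=
  [/\ forall a b, phi (a + b) = phi a + phi b,
      forall (al : C) a, phi (al *: a) = al * phi a
    & forall a b, phi (a * b) = phi a * phi b].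

Definition mult_functionals_total (A : algType C) : Prop :=
  forall a : A, (forall phi : A -> C, lin_mult_functional phi -> phi a = 0) ->
    a = 0.

Definition invertible (A : algType C) (a : A) : Prop :=
  exists b : A, a * b = 1 /\ b * a = 1.

Definition right_module (A : algType C) (X : lmodType C) (act : X -> A -> X)
  : Prop :=
  [/\ forall x y a, act (x + y) a = act x a + act y a,
      forall x a b, act x (a + b) = act x a + act x b,
      forall x a b, act x (a * b) = act (act x a) b,
      forall (al : C) x a, act (al *: x) a = act x (al *: a)
    & forall (al : C) x a, act x (al *: a) = al *: act x a].

(* ---- multi-A-linear functions X^n -> A ----
   Variables are indexed by i : 'I_n (0-based), so the paper's j-th variable
   is i with j = i + 1; "j even" means odd i, "j odd" means ~~ odd i. *)
Definition upd (X : Type) n (x : 'I_n -> X) (i : 'I_n) (y : X) : 'I_n -> X :=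
  fun k => if k == i then y else x k.

Definition multi_A_linear (A : algType C) (star : A -> A) (X : lmodType C)
  (act : X -> A -> X) n (F : ('I_n -> X) -> A) : Prop :=
  [/\ forall (x : 'I_n -> X) (i : 'I_n) (y z : X), F (upd x i (y + z)) = F (upd x i y) + F (upd x i z),
      forall (x : 'I_n -> X) (i : 'I_n) (al : C) (a : A), odd i ->
        F (upd x i (act (al *: x i) a)) = al *: (F x * a)
    & forall (x : 'I_n -> X) (i : 'I_n) (al : C) (a : A), ~~ odd i ->
        F (upd x i (act (al *: x i) a)) = conjc al *: (star a * F x)].

Definition bounded_multi (A : algType C) (nrmA : A -> R) (X : lmodType C)
  (nrmX : X -> R) n (F : ('I_n -> X) -> A) : Prop :=
  exists M : R, forall x : 'I_n -> X, nrmA (F x) <= M * \prod_(i < n) nrmX (x i).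

Definition strong_multi (A : algType C) (X : lmodType C) n
  (F : ('I_n -> X) -> A) : Prop :=
  exists w : X, invertible (F (fun _ => w)).
End Defs.

From HB Require Import structures.
From mathcomp Require Import all_boot all_order all_algebra.
From mathcomp Require Import reals complex.
From Stdlib Require Import FunctionalExtensionality.
Set Implicit Arguments. Unset Strict Implicit. Unset Printing Implicit Defensive.
Import Order.TTheory GRing.Theory Num.Theory.
Local Open Scope ring_scope.

(** Totality of the multiplicative functionals forces A to be commutative, so
   acting by a on the k-th variable multiplies a multi-A-linear map by a or by
   a^* according to the parity of k ([twist]).  If ker E is contained in ker F,
   evaluating at y with its k-th entry replaced by t p' - y_k q', where p = E y,
   q = E (y[k := t]) and p', q' are their twists, gives
   E y F (y[k := t]) = E (y[k := t]) F y.  Applied to D = F - c E with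
   c = F (w,...,w) E (w,...,w)^-1, this keeps D zero along one-coordinate
   changes of points where E is invertible.  Any such point can be moved in one
   coordinate, by an element of y_k A, to a point where E equals 1, so an
   induction on the number of coordinates in which x differs from the base
   point gives D x = 0.  Boundedness of F = c E is then immediate. *)

Section Upd.
Variables (T : Type) (n : nat).
Implicit Types (x : 'I_n -> T) (i : 'I_n).

Lemma upd_eq x i v : upd x i v i = v.
Proof. by rewrite /upd eqxx. Qed.

Lemma upd_upd x i u v : upd (upd x i u) i v = upd x i v.
Proof. by apply: functional_extensionality => k; rewrite /upd; case: (k == i). Qed.

Lemma upd_id x i : upd x i (x i) = x.
Proof. by apply: functional_extensionality => k; rewrite /upd; case: eqP => [->|]. Qed.

End Upd.

Lemma card_diff_upd (T : eqType) n (x y : 'I_n -> T) k v : x k != y k ->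
  (#|[set i | upd x k v i != upd y k v i]| < #|[set i | x i != y i]|)%N.
Proof.
move=> xy_ne; apply: proper_card; apply/properP; split.
  by apply/subsetP => i; rewrite !inE /upd; case: (i == k); rewrite ?eqxx.
by exists k; rewrite !inE ?upd_eq ?eqxx.
Qed.

Lemma mult_functionals_total_mulC (R : realType) (A : algType R[i]) :
  mult_functionals_total A -> commutative (@GRing.mul A).
Proof.
move=> htot a b; apply/eqP; rewrite -subr_eq0; apply/eqP; apply: htot.
move=> phi [phiD phiZ phiM].
by rewrite phiD -scaleN1r phiZ !phiM mulN1r mulrC subrr.
Qed.

Lemma bounded_multi_mull (R : realType) (A : algType R[i]) (nrmA : A -> R)
    (X : lmodType R[i]) (nrmX : X -> R) n (E : ('I_n -> X) -> A) (c : A) :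
  (forall a, 0 <= nrmA a) -> (forall a b, nrmA (a * b) <= nrmA a * nrmA b) ->
  bounded_multi nrmA nrmX E -> bounded_multi nrmA nrmX (fun x => c * E x).
Proof.
move=> nrmA_ge0 nrmAM [M EM]; exists (nrmA c * M) => x.
by rewrite -mulrA; apply: le_trans (nrmAM _ _) _; rewrite ler_wpM2l.
Qed.

Section MultiALinear.
Variables (R : realType) (A : algType R[i]) (star : A -> A).
Variables (X : lmodType R[i]) (act : X -> A -> X) (n : nat).
Hypothesis starK : involutive star.
Hypothesis mulAC : commutative (@GRing.mul A).
Implicit Types (x y : 'I_n -> X) (k : 'I_n).

Definition twist (k : nat) (a : A) := if odd k then a else star a.

Lemma twistK k : involutive (twist k).
Proof. by rewrite /twist; case: (odd k). Qed.

Section OneMap.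
Variable G : ('I_n -> X) -> A.
Hypothesis hG : multi_A_linear star act G.

Lemma multi_A_linearD x k u v : G (upd x k (u + v)) = G (upd x k u) + G (upd x k v).
Proof. by case: hG => GD _ _; apply: GD. Qed.

Lemma multi_A_linearB x k u v : G (upd x k (u - v)) = G (upd x k u) - G (upd x k v).
Proof.
by apply/eqP; rewrite eq_sym subr_eq -multi_A_linearD subrK.
Qed.

Lemma multi_A_linear_act x k v a : G (upd x k (act v a)) = twist k a * G (upd x k v).
Proof.
case: hG => _ GZ Gconj; rewrite /twist; case: ifP => odd_k.
  by have := GZ (upd x k v) k 1 a odd_k; rewrite upd_eq upd_upd !scale1r mulAC.
have := Gconj (upd x k v) k 1 a (negbT odd_k).
by rewrite upd_eq upd_upd rmorph1 !scale1r.
Qed.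

End OneMap.

Lemma multi_A_linear_subM E F c :
  multi_A_linear star act E -> multi_A_linear star act F ->
  multi_A_linear star act (fun x => F x - c * E x).
Proof.
move=> [ED EZ Econj] [FD FZ Fconj]; split=> x i.
- by move=> u v; rewrite ED FD mulrDr opprD addrACA.
- by move=> al a odd_i; rewrite EZ // FZ // mulrBl scalerBr -scalerAr mulrA.
- move=> al a even_i; rewrite Econj // Fconj // mulrBr scalerBr -scalerAr.
  by rewrite !mulrA (mulAC c).
Qed.

Section Vanishing.
Variables E D : ('I_n -> X) -> A.
Hypotheses (hE : multi_A_linear star act E) (hD : multi_A_linear star act D).
Hypothesis kerED : forall x, E x = 0 -> D x = 0.

Lemma cross_mul_upd y k t : E y * D (upd y k t) = E (upd y k t) * D y.
Proof.
set p := E y; set q := E (upd y k t).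
pose s := act t (twist k p) - act (y k) (twist k q).
have Es0 : E (upd y k s) = 0.
  by rewrite multi_A_linearB // !multi_A_linear_act // upd_id !twistK -/p -/q mulAC subrr.
move/kerED: Es0; rewrite multi_A_linearB // !multi_A_linear_act // upd_id !twistK.
by move/eqP; rewrite subr_eq0 => /eqP.
Qed.

Lemma vanish_upd y k t : invertible (E y) -> D y = 0 -> D (upd y k t) = 0.
Proof.
case=> b [_ bE] Dy0.
by rewrite -[D _]mul1r -bE -mulrA cross_mul_upd Dy0 !mulr0.
Qed.

Lemma unit_upd_shift y k t : invertible (E y) ->
  exists a, E (upd y k (t + act (y k) a)) = 1.
Proof.
case=> b [_ bE]; exists (twist k ((1 - E (upd y k t)) * b)).
rewrite multi_A_linearD // multi_A_linear_act // upd_id twistK.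
by rewrite -mulrA bE mulr1 addrC subrK.
Qed.

Lemma vanish_everywhere y : invertible (E y) -> D y = 0 -> forall x, D x = 0.
Proof.
move=> Ey Dy x; have [m] := ubnP #|[set i | x i != y i]|.
elim: m => // m IH in x y Ey Dy *; rewrite ltnS => dist_xy.
have [k /= xy_ne | xy_eq] := pickP [pred i | x i != y i]; last first.
  suff -> : x = y by [].
  by apply: functional_extensionality => i; apply/eqP; apply/negbFE/xy_eq.
have [a Ey'] := unit_upd_shift k (x k) Ey.
have D1 : D (upd x k (x k + act (y k) a)) = 0.
  apply: (IH _ (upd y k (x k + act (y k) a))).
  - by rewrite Ey'; exists 1; rewrite mulr1.
  - exact: vanish_upd.
  - exact: leq_trans (card_diff_upd _ xy_ne) dist_xy.
have D2 : D (upd x k (y k)) = 0.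
  apply: (IH _ y) => //; have := card_diff_upd (y k) xy_ne.
  by rewrite upd_id => /leq_trans/(_ dist_xy).
by move: D1; rewrite multi_A_linearD // multi_A_linear_act // upd_id D2 mulr0 addr0.
Qed.

End Vanishing.

Lemma proportional_of_kernel_incl E F :
  multi_A_linear star act E -> multi_A_linear star act F -> strong_multi E ->
  (forall x, E x = 0 -> F x = 0) -> exists c, forall x, F x = c * E x.
Proof.
move=> hE hF [w [b [Eb bE]]] kerEF; pose c := F (fun=> w) * b.
exists c => x; apply/eqP; rewrite -subr_eq0; apply/eqP; move: x.
apply: (vanish_everywhere hE (multi_A_linear_subM c hE hF) _ (y := fun=> w)).
- by move=> x Ex0; rewrite kerEF // Ex0 mulr0 subr0.
- by exists b.
- by rewrite -mulrA bE mulr1 subrr.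
Qed.

End MultiALinear.

Theorem theorem3p6 (R : realType) (A : algType R[i]) (star : A -> A)
  (nrmA : A -> R) (hA : is_Cstar_algebra star nrmA)
  (htot : mult_functionals_total A)
  (X : lmodType R[i]) (act : X -> A -> X) (hX : right_module act)
  (nrmX : X -> R) (hnX : is_cnorm nrmX)
  (n : nat) (hn : (2 <= n)%N) (E F : ('I_n -> X) -> A)
  (hE : multi_A_linear star act E) (hF : multi_A_linear star act F)
  (hEb : bounded_multi nrmA nrmX E) (hEs : strong_multi E) :
  ((forall x : 'I_n -> X, E x = 0 -> F x = 0) <->
   (exists c : A, forall x : 'I_n -> X, F x = c * E x)) /\
  ((forall x : 'I_n -> X, E x = 0 -> F x = 0) -> bounded_multi nrmA nrmX F) /\
  ((exists c : A, forall x : 'I_n -> X, F x = c * E x) -> bounded_multi nrmA nrmX F).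
Proof.
have [[[nrmA_ge0 _ _ _] nrmAM _] [_ _ _ starK] _] := hA.
have mulAC := mult_functionals_total_mulC htot.
have prop_of_ker := proportional_of_kernel_incl starK mulAC hE hF hEs.
have ker_of_prop : (exists c, forall x, F x = c * E x) -> forall x, E x = 0 -> F x = 0.
  by move=> [c Fc] x Ex0; rewrite Fc Ex0 mulr0.
have bounded_of_prop : (exists c, forall x, F x = c * E x) -> bounded_multi nrmA nrmX F.
  move=> [c Fc]; rewrite (functional_extensionality _ _ Fc).
  exact: bounded_multi_mull.
by split; [split | split=> // /prop_of_ker].
Qed.
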